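(* Consider the system on $\mathbb{R}^2$ $$\dot x=f(x)=\begin{bmatrix}-x_1^3+x_1^5x_2\\ -x_2^3-x_1^6\end{bmatrix}$$ and the quadratic candidate $V(x)=c_0x_1^2+c_1x_2^2+c_2x_1x_2$ with real coefficients $c_0,c_1,c_2$, with Lie derivative $\dot V(x)=\nabla V(x)\cdot f(x)$. Let $\mu>0$ and let $\{y_j\}_{j=1}^N\subset\mathbb{R}^2\setminus\{0\}$ be any finite set of sample points. Then there exist $c_0,c_1,c_2$ with $c_0\ne c_1$ such that $V$ satisfies both (a) $V(y_j)>0$ and $\dot V(y_j)<0$ for all $j=1,\dots,N$; and (b) $V(y_j)\ge \mu\min(|y_j|^{l_V},|y_j|^{k_V})$ and $\dot V(y_j)\le -\mu\min(|y_j|^{l_{\dot V}},|y_j|^{k_{\dot V}})$ for all $j=1,\dots,N$, where $l_V,k_V$ (resp. $l_{\dot V},k_{\dot V}$) denote the lowest and highest total degrees of the monomials with nonzero coefficient in $V$ (resp. $\dot V$), and $|\cdot|$ is the Euclidean norm.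
   Context: Total degree of the monomial $x_1^{a}x_2^{b}$ is $a+b$. Note that $\dot V(x)=(2c_0-2c_1)x_1^6x_2-c_2x_1^7+c_2x_1^5x_2^2-2c_0x_1^4-2c_1x_2^4-c_2x_1^3x_2-c_2x_1x_2^3$. *)

From HB Require Import structures.
From mathcomp Require Import all_boot all_order all_algebra.
From mathcomp Require Import mpoly.
From mathcomp Require Import Rstruct.
From Stdlib Require Import Reals.
Set Implicit Arguments.
Unset Strict Implicit.
Unset Printing Implicit Defensive.
Import Order.TTheory GRing.Theory Num.Theory.
Local Open Scope ring_scope.

Notation R := Reals.Rdefinitions.R.

(* The polynomial vector field f = (f1, f2) in the variables x1 = 'X_0, x2 = 'X_1. *)
Definition f1 : {mpoly R[2]} := - 'X_0 ^+ 3 + 'X_0 ^+ 5 * 'X_1.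
Definition f2 : {mpoly R[2]} := - 'X_1 ^+ 3 - 'X_0 ^+ 6.

Definition Vpoly (c0 c1 c2 : R) : {mpoly R[2]} :=
  c0 *: 'X_0 ^+ 2 + c1 *: 'X_1 ^+ 2 + c2 *: ('X_0 * 'X_1).

Definition lie_deriv (p : {mpoly R[2]}) : {mpoly R[2]} :=
  mderiv 0 p * f1 + mderiv 1 p * f2.

Definition highdeg (p : {mpoly R[2]}) : nat := (msize p).-1.

(* Lowest total degree of a monomial with nonzero coefficient
   (defaults to highdeg p, i.e. 0, for the zero polynomial). *)
Definition lowdeg (p : {mpoly R[2]}) : nat :=
  foldr minn (highdeg p) [seq mdeg m | m <- msupp p].

Definition enorm (y : 'I_2 -> R) : R := Num.sqrt (y 0 ^+ 2 + y 1 ^+ 2).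

From HB Require Import structures.
From mathcomp Require Import all_boot all_order all_algebra.
From mathcomp Require Import mpoly.
From mathcomp Require Import Rstruct.
From mathcomp Require Import ring lra.
From Stdlib Require Import FunctionalExtensionality.
Import Order.TTheory GRing.Theory Num.Theory.
Local Open Scope ring_scope.

(* Take V = c0 x1^2 + c1 x2^2 with c1 = 2 mu and c0 = 2 mu + eps, so that
   Vdot = 2 eps x1^6 x2 - 2 c0 x1^4 - 2 c1 x2^4. Its only indefinite term is
   dominated by mu x1^4 at the finitely many samples once eps is small enough,
   which gives V >= mu |y|^2 and Vdot <= - mu |y|^4 there. As the monomials x1^2
   of V and x1^4 of Vdot have nonzero coefficients, the exponents 2 and 4 lie
   between the lowest and highest degrees, so |y|^2 and |y|^4 dominate the
   required minima. *)

Lemma exists_pos_mul_le {F : realFieldType} {N : nat} {m : F} (b : 'I_N -> F) :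
  0 < m -> exists2 eps : F, 0 < eps & forall j, eps * b j <= m.
Proof.
move=> m0; pose S := 1 + \sum_i `|b i|.
have S_ge1 : 1 <= S by rewrite lerDl sumr_ge0.
have S0 : 0 < S by apply: lt_le_trans S_ge1.
exists (m / S) => [|j]; first by rewrite divr_gt0.
have b_le_S : b j <= S.
  apply: le_trans (ler_norm _) _; rewrite /S (bigD1 j) //= addrCA ler_wpDr //.
  by rewrite addr_ge0 ?sumr_ge0.
by rewrite mulrAC ler_pdivrMr // ler_wpM2l // ltW.
Qed.

Lemma ge_min_expn {F : realDomainType} (a : F) (l m k : nat) :
  0 <= a -> (l <= m <= k)%N -> Num.min (a ^+ l) (a ^+ k) <= a ^+ m.
Proof.
move=> a0 /andP[lm mk]; rewrite ge_min.
have [a1|a1] := lerP a 1; first by rewrite (ler_wiXn2l a0 a1 mk) orbT.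
by rewrite (ler_weXn2l (ltW a1) lm).
Qed.

Lemma quadratic_form_ge {F : realDomainType} (c0 c1 mu x z : F) :
  mu <= c0 -> mu <= c1 -> mu * (x ^+ 2 + z ^+ 2) <= c0 * x ^+ 2 + c1 * z ^+ 2.
Proof. by move=> hc0 hc1; rewrite mulrDr lerD // ler_wpM2r // sqr_ge0. Qed.

Lemma lie_deriv_form_le {F : realDomainType} (c0 c1 mu x z : F) :
  0 <= mu -> 3 * mu <= 2 * c0 -> mu <= c1 -> 2 * (c0 - c1) * (x ^+ 2 * z) <= mu ->
  2 * (c0 - c1) * (x ^+ 6 * z) - 2 * c0 * x ^+ 4 - 2 * c1 * z ^+ 4
    <= - (mu * (x ^+ 2 + z ^+ 2) ^+ 2).
Proof.
move=> mu0 hc0 hc1 hxz.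
have x4 : 0 <= x ^+ 4 by rewrite (exprM x 2 2) sqr_ge0.
have z4 : 0 <= z ^+ 4 by rewrite (exprM z 2 2) sqr_ge0.
have cross : 2 * (c0 - c1) * (x ^+ 6 * z) <= mu * x ^+ 4.
  have -> : 2 * (c0 - c1) * (x ^+ 6 * z) = x ^+ 4 * (2 * (c0 - c1) * (x ^+ 2 * z)).
    by ring.
  by rewrite mulrC ler_wpM2r.
have diff_ge0 : 0 <= mu * (x ^+ 2 - z ^+ 2) ^+ 2 by rewrite mulr_ge0 ?sqr_ge0.
have sqr_sum : (x ^+ 2 + z ^+ 2) ^+ 2 = x ^+ 4 + 2 * (x ^+ 2 * z ^+ 2) + z ^+ 4.
  by ring.
have sqr_diff : (x ^+ 2 - z ^+ 2) ^+ 2 = x ^+ 4 - 2 * (x ^+ 2 * z ^+ 2) + z ^+ 4.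
  by ring.
nra.
Qed.

Lemma foldr_minn_le (d x : nat) (s : seq nat) : x \in s -> (foldr minn d s <= x)%N.
Proof.
elim: s => //= a s IHs; rewrite in_cons => /predU1P[->|/IHs xs].
  exact: geq_minl.
by rewrite geq_min xs orbT.
Qed.

Lemma mdeg_in_degree_range (p : {mpoly R[2]}) m :
  p@_m != 0 -> (lowdeg p <= mdeg m <= highdeg p)%N.
Proof.
rewrite -mcoeff_msupp => pm; apply/andP; split.
  exact/foldr_minn_le/map_f.
by rewrite /highdeg -ltnS (ltn_predK (msize_mdeg_lt pm)) msize_mdeg_lt.
Qed.

Lemma mderivXU {n : nat} {K : nzRingType} (i j : 'I_n) :
  mderiv i ('X_j : {mpoly K[n]}) = (i == j)%:R.
Proof.
rewrite mderivX mnm1E eq_sym; have [->|_] := eqVneq i j; last by rewrite scale0r.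
by rewrite -[X in (X - _)%MM]add0m addmK mpolyX0 scale1r.
Qed.

Lemma lie_deriv_Vpoly (c0 c1 : R) : lie_deriv (Vpoly c0 c1 0) =
  (2 * (c0 - c1))%:MP * ('X_0 ^+ 6 * 'X_1) - (2 * c0)%:MP * 'X_0 ^+ 4
  - (2 * c1)%:MP * 'X_1 ^+ 4.
Proof.
rewrite /lie_deriv /Vpoly /f1 /f2 -!mul_mpolyC !mderivD !mderiv_mulC !expr2.
rewrite !mderivM !mderivXU /= mpolyC0 !(mpolyCM, mpolyCB) mpolyC_nat.
ring.
Qed.

Lemma Vpoly_eval (c0 c1 : R) (v : 'I_2 -> R) :
  (Vpoly c0 c1 0).@[v] = c0 * v 0 ^+ 2 + c1 * v 1 ^+ 2.
Proof. by rewrite /Vpoly !(mevalD, mevalZ, rmorphXn) /= !mevalXU mul0r addr0. Qed.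

Lemma lie_deriv_Vpoly_eval (c0 c1 : R) (v : 'I_2 -> R) :
  (lie_deriv (Vpoly c0 c1 0)).@[v] =
  2 * (c0 - c1) * (v 0 ^+ 6 * v 1) - 2 * c0 * v 0 ^+ 4 - 2 * c1 * v 1 ^+ 4.
Proof. by rewrite lie_deriv_Vpoly !(mevalB, mevalM, mevalC, rmorphXn) /= !mevalXU. Qed.

Lemma mcoeff_Vpoly (c0 c1 : R) : (Vpoly c0 c1 0)@_(U_(0%R) *+ 2) = c0.
Proof.
rewrite /Vpoly !mcoeffD !mcoeffZ !mpolyXn !mcoeffX eqxx.
have -> : (U_(1%R) *+ 2 == U_(0%R) *+ 2 :> 'X_{1..2})%MM = false.
  by apply/eqP => /mnmP/(_ 0); rewrite !mnmE.
by rewrite mulr1 mulr0 mul0r !addr0.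
Qed.

Lemma mcoeff_lie_deriv_Vpoly (c0 c1 : R) :
  (lie_deriv (Vpoly c0 c1 0))@_(U_(0%R) *+ 4) = - (2 * c0).
Proof.
rewrite lie_deriv_Vpoly !mcoeffB !mcoeffCM !mpolyXn -mpolyXD !mcoeffX eqxx.
have -> : (U_(1%R) *+ 4 == U_(0%R) *+ 4 :> 'X_{1..2})%MM = false.
  by apply/eqP => /mnmP/(_ 0); rewrite !mnmE.
have -> : (U_(0%R) *+ 6 + U_(1%R) == U_(0%R) *+ 4 :> 'X_{1..2})%MM = false.
  by apply/eqP => /mnmP/(_ 0); rewrite !mnmE.
by rewrite !mulr0 mulr1 !sub0r subr0.
Qed.

Lemma enorm_sqr (v : 'I_2 -> R) : enorm v ^+ 2 = v 0 ^+ 2 + v 1 ^+ 2.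
Proof. by rewrite sqr_sqrtr // addr_ge0 ?sqr_ge0. Qed.

Lemma enorm_gt0 {v : 'I_2 -> R} : v <> (fun _ => 0) -> 0 < enorm v.
Proof.
move=> v_nz; rewrite sqrtr_gt0 lt_def addr_ge0 ?sqr_ge0 // andbT.
rewrite paddr_eq0 ?sqr_ge0 // !sqrf_eq0; apply/negP => /andP[/eqP v0 /eqP v1].
apply: v_nz; apply: functional_extensionality => -[[|[|//]] i_lt];
  [rewrite -v0 | rewrite -v1]; congr v; exact: val_inj.
Qed.

Lemma Vpoly_degree_range (c0 c1 : R) : c0 != 0 ->
  (lowdeg (Vpoly c0 c1 0%R) <= 2 <= highdeg (Vpoly c0 c1 0%R))%N.
Proof.
move=> c0_nz; have := @mdeg_in_degree_range (Vpoly c0 c1 0) (U_(0%R) *+ 2).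
by rewrite mdegMn mdeg1 mcoeff_Vpoly; apply.
Qed.

Lemma lie_deriv_Vpoly_degree_range (c0 c1 : R) : c0 != 0 ->
  (lowdeg (lie_deriv (Vpoly c0 c1 0%R)) <= 4
   <= highdeg (lie_deriv (Vpoly c0 c1 0%R)))%N.
Proof.
move=> c0_nz.
have := @mdeg_in_degree_range (lie_deriv (Vpoly c0 c1 0)) (U_(0%R) *+ 4).
rewrite mdegMn mdeg1; apply.
by rewrite mcoeff_lie_deriv_Vpoly oppr_eq0 mulf_neq0 ?pnatr_eq0.
Qed.

Theorem claim1 (mu : R) (N : nat) (y : 'I_N -> 'I_2 -> R) :
  0 < mu ->
  (forall j, y j <> (fun _ => 0)) ->
  exists c0 c1 c2 : R,
    c0 != c1 /\
    (forall j, 0 < (Vpoly c0 c1 c2).@[y j] /\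
               (lie_deriv (Vpoly c0 c1 c2)).@[y j] < 0) /\
    (forall j,
       mu * Num.min (enorm (y j) ^+ lowdeg (Vpoly c0 c1 c2))
                    (enorm (y j) ^+ highdeg (Vpoly c0 c1 c2))
         <= (Vpoly c0 c1 c2).@[y j] /\
       (lie_deriv (Vpoly c0 c1 c2)).@[y j]
         <= - (mu * Num.min (enorm (y j) ^+ lowdeg (lie_deriv (Vpoly c0 c1 c2)))
                            (enorm (y j) ^+ highdeg (lie_deriv (Vpoly c0 c1 c2))))).
Proof.
move=> mu_gt0 y_nz; have mu_ge0 := ltW mu_gt0.
have [eps eps_gt0 eps_small] :=
  exists_pos_mul_le (fun j => 2 * (y j 0 ^+ 2 * y j 1)) mu_gt0.
pose c0 := 2 * mu + eps; pose c1 := 2 * mu.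
have c0Bc1 : c0 - c1 = eps by rewrite /c0 /c1 addrAC subrr add0r.
have c0_nz : c0 != 0 by rewrite gt_eqF // addr_gt0 // mulr_gt0.
have V_ge j : mu * enorm (y j) ^+ 2 <= (Vpoly c0 c1 0).@[y j].
  by rewrite Vpoly_eval enorm_sqr quadratic_form_ge // /c0 /c1; lra.
have Vdot_le j : (lie_deriv (Vpoly c0 c1 0)).@[y j] <= - (mu * enorm (y j) ^+ 4).
  rewrite lie_deriv_Vpoly_eval (exprM (enorm _) 2 2) enorm_sqr.
  apply: lie_deriv_form_le => //; [rewrite /c0; lra | rewrite /c1; lra |].
  by rewrite c0Bc1 -mulrA mulrCA eps_small.
exists c0, c1, 0; split; first by rewrite -subr_eq0 c0Bc1 gt_eqF.
split=> j; have a_gt0 := enorm_gt0 (y_nz j); split.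
- by rewrite (lt_le_trans _ (V_ge j)) ?mulr_gt0 ?exprn_gt0.
- by rewrite (le_lt_trans (Vdot_le j)) // oppr_lt0 mulr_gt0 ?exprn_gt0.
- apply: le_trans (V_ge j); rewrite ler_wpM2l // ge_min_expn ?ltW //.
  exact: Vpoly_degree_range.
- apply: le_trans (Vdot_le j) _; rewrite lerN2 ler_wpM2l // ge_min_expn ?ltW //.
  exact: lie_deriv_Vpoly_degree_range.
Qed.
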